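(* Let $k\geq2$ and let $W\subseteq\mathbb{Z}_{3k}$ be such that for every $i\in\mathbb{Z}_{3k}$, $|x^i\cap W|\geq1$ and $|C^i\cap\overline W|\geq2$, where $\overline W=\mathbb{Z}_{3k}\setminus W$. Let $i\in\overline W$ be such that $\overline W\cap[i+2k,i+2k+\omega(i)]_{3k}\neq\emptyset$. Then there exists a cover $\tilde x$ of $C^k_{3k}$ with $|\tilde x|=4$ and $\tilde x\cap W=\emptyset$.
   Context: $\mathbb{Z}_{3k}=\{0,\dots,3k-1\}$ with addition modulo $3k$; $[a,b]_{3k}$ is the cyclic closed interval from $a$ to $b$. $C^i=\{i,\dots,i+k-1\}$ (mod $3k$), $C^k_{3k}$ is the $3k\times3k$ $0,1$ matrix whose $i$-th row is the incidence vector of $C^i$, and a cover is a subset $x\subseteq\mathbb{Z}_{3k}$ meeting every $C^i$. $x^i=\{i,i+k,i+2k\}$. For $i\in\overline W$, $\omega(i)=\min\{t\geq0: i+k+t\in\overline W\}$ (well defined since $|C^{i+k}\cap\overline W|\ge2$). *)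

From mathcomp Require Import all_boot.
Set Implicit Arguments. Unset Strict Implicit. Unset Printing Implicit Defensive.

(* Z_{3k} is modelled as 'I_(3*k); a natural number m denotes the residue m mod 3k. *)
Definition zmem (k : nat) (A : {set 'I_(3*k)}) (m : nat) : bool :=
  m %% (3*k) \in [seq val j | j in A].

Definition Cset (k i : nat) : {set 'I_(3*k)} :=
  [set j : 'I_(3*k) | [exists t : 'I_k, val j == (i + t) %% (3*k)]].

Definition xset (k i : nat) : {set 'I_(3*k)} :=
  [set j : 'I_(3*k) | [exists t : 'I_3, val j == (i + t * k) %% (3*k)]].

Definition is_cover (k : nat) (x : {set 'I_(3*k)}) : Prop :=
  forall i : 'I_(3*k), x :&: Cset k i != set0.

Definition is_omega (k : nat) (Wbar : {set 'I_(3*k)}) (i t : nat) : Prop :=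
  zmem Wbar (i + k + t) /\ forall s, s < t -> ~~ zmem Wbar (i + k + s).

From mathcomp Require Import all_boot zify.

Set Implicit Arguments.
Unset Strict Implicit.
Unset Printing Implicit Defensive.

(* Write every point as an offset from i.  With t = omega(i), the window C^(i+t)
   contains a second point i+o of the complement besides i; minimality of t forces
   t <= o < k.  The four points i, i+o, i+k+t and i+2k+s (s <= t) lie in the
   complement and consecutive offsets 0, o, k+t, 2k+s, 3k differ by at most k, so
   every window of length k contains one of them. *)

Section Offsets.

Variable k : nat.
Hypothesis k3_gt0 : 0 < 3 * k.

Definition zshift (i m : nat) : 'I_(3 * k) := Ordinal (ltn_pmod (i + m) k3_gt0).

Lemma zmem_zshift (A : {set 'I_(3 * k)}) i m : zmem A (i + m) = (zshift i m \in A).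
Proof.
rewrite /zmem; have -> : (i + m) %% (3 * k) = val (zshift i m) by [].
by rewrite (mem_map val_inj) mem_enum.
Qed.

Lemma zshift0 (i : 'I_(3 * k)) : zshift i 0 = i.
Proof. by apply: val_inj; rewrite /= addn0 modn_small. Qed.

Lemma zshiftD3k i m : zshift i (m + 3 * k) = zshift i m.
Proof. by apply: val_inj; rewrite /= addnA modnDr. Qed.

Lemma eq_zshift i m1 m2 :
  m1 < 3 * k -> m2 < 3 * k -> (zshift i m1 == zshift i m2) = (m1 == m2).
Proof.
move=> lt1 lt2; apply/eqP/eqP => [/(congr1 val) /= /eqP|-> //].
by rewrite eqn_modDl !modn_small // => /eqP.
Qed.

Lemma zshift_onto (i j : 'I_(3 * k)) : exists2 r, r < 3 * k & j = zshift i r.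
Proof.
have ltj := ltn_ord j; have lti := ltn_ord i.
case: (leqP i j) => [le_ij|lt_ji].
  by exists (j - i); last (apply: val_inj; rewrite /= modn_small); lia.
exists (j + 3 * k - i); first lia.
apply: val_inj => /=; have -> : i + (j + 3 * k - i) = j + 3 * k by lia.
by rewrite modnDr modn_small.
Qed.

Lemma Cset_zshiftP i m x :
  x \in Cset k (zshift i m) -> exists2 u, u < k & x = zshift i (m + u).
Proof.
rewrite inE => /existsP [u /eqP ex]; exists u => //.
by apply: val_inj; rewrite ex /= modnDml addnA.
Qed.

Lemma zshift_in_Cset i r o : r <= o < r + k -> zshift i o \in Cset k (zshift i r).
Proof.
move=> /andP [le_ro lt_or]; rewrite inE; apply/existsP.
have lt_k : o - r < k by lia.
exists (Ordinal lt_k); apply/eqP; rewrite /= modnDml -addnA subnKC //.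
Qed.

Lemma card_zshift4 (i : 'I_(3 * k)) a b c :
  0 < a < b -> b < c < 3 * k -> #|[set zshift i 0; zshift i a; zshift i b; zshift i c]| = 4.
Proof.
move=> ab bc; rewrite -!setUA !cardsU1 cards1 !inE !eq_zshift; lia.
Qed.

(* Offset 0 also plays the role of offset 3k, closing the cycle. *)
Lemma cover_zshift4 (i : 'I_(3 * k)) a b c :
  a <= b <= c -> a <= k -> b <= a + k -> c <= b + k -> 3 * k <= c + k ->
  is_cover [set zshift i 0; zshift i a; zshift i b; zshift i c].
Proof.
move=> abc le_a le_b le_c le_3k j; apply/set0Pn.
set X := [set _; _; _; _].
have [r lt_r ->] := zshift_onto i j.
have hit o : zshift i o \in X -> r <= o < r + k -> exists x, x \in X :&: Cset k (zshift i r).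
  by move=> Xo win; exists (zshift i o); rewrite inE Xo zshift_in_Cset.
have X0 : zshift i 0 \in X by rewrite !inE eqxx.
case: (posnP r) => [r0|r_gt0]; first by apply: (hit 0) => //; lia.
case: (leqP r a) => [le_ra|lt_ar]; first by apply: (hit a); rewrite ?inE ?eqxx ?orbT //; lia.
case: (leqP r b) => [le_rb|lt_br]; first by apply: (hit b); rewrite ?inE ?eqxx ?orbT //; lia.
case: (leqP r c) => [le_rc|lt_cr]; first by apply: (hit c); rewrite ?inE ?eqxx ?orbT //; lia.
by apply: (hit (0 + 3 * k)); rewrite ?zshiftD3k //; lia.
Qed.

Variable Wbar : {set 'I_(3 * k)}.
Hypothesis Cset_Wbar : forall j : 'I_(3 * k), 2 <= #|Cset k j :&: Wbar|.

Section Omega.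

Variables (i : 'I_(3 * k)) (t : nat).
Hypothesis omega_it : is_omega Wbar i t.

Lemma omega_notin u : u < t -> zshift i (k + u) \notin Wbar.
Proof. by case: omega_it => _ tmin lt_ut; rewrite -zmem_zshift addnA tmin. Qed.

Lemma omega_ltk : t < k.
Proof.
have /card_gt0P [x] : 0 < #|Cset k (zshift i k) :&: Wbar| by apply: leq_trans (Cset_Wbar _).
rewrite inE => /andP [/Cset_zshiftP [u lt_uk ->] Wx].
by rewrite ltnNge; apply/negP => le_kt; move: (omega_notin (leq_trans lt_uk le_kt)); rewrite Wx.
Qed.

Lemma omega_second_point : exists o, [/\ 0 < o, t <= o, o < k & zshift i o \in Wbar].
Proof.
have /card_gt0P [x] : 0 < #|(Cset k (zshift i t) :&: Wbar) :\ zshift i 0|.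
  rewrite -ltnS (leq_trans (Cset_Wbar (zshift i t))) //.
  by rewrite (cardsD1 (zshift i 0)) addnC -[X in _ <= X]addn1 leq_add2l leq_b1.
rewrite in_setD1 in_setI => /andP [x_neq0 /andP [/Cset_zshiftP [u lt_uk def_x] Wx]]; subst x.
have lt_tk := omega_ltk.
have o_gt0 : 0 < t + u by rewrite lt0n; apply: contra_neq x_neq0 => ->.
exists (t + u); split=> //; first lia.
rewrite ltnNge; apply/negP => le_ko.
move: Wx; have -> : t + u = k + (t + u - k) by lia.
by apply/negP/omega_notin; lia.
Qed.

End Omega.

End Offsets.

Theorem mainTheorem8 (k : nat) (W : {set 'I_(3*k)}) (i : 'I_(3*k)) :
  2 <= k ->
  (forall j : 'I_(3*k), 1 <= #|xset k j :&: W|) ->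
  (forall j : 'I_(3*k), 2 <= #|Cset k j :&: ~: W|) ->
  i \in ~: W ->
  (exists t, is_omega (~: W) i t /\
     exists s, s <= t /\ zmem (~: W) (i + 2 * k + s)) ->
  exists xt : {set 'I_(3*k)}, is_cover xt /\ #|xt| = 4 /\ xt :&: W = set0.
Proof.
move=> k_ge2 _ CWbar Wbar_i [t [omega_it [s [le_st Wbar_s]]]].
have k3_gt0 : 0 < 3 * k by lia.
have lt_tk := omega_ltk k3_gt0 CWbar omega_it.
have [o [o_gt0 le_to lt_ok Wbar_o]] := omega_second_point k3_gt0 CWbar omega_it.
rewrite -(zshift0 k3_gt0 i) in Wbar_i.
have Wbar_t : zshift k3_gt0 i (k + t) \in ~: W.
  by case: omega_it; rewrite -addnA zmem_zshift.
rewrite -addnA zmem_zshift in Wbar_s.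
exists [set zshift k3_gt0 i 0; zshift k3_gt0 i o; zshift k3_gt0 i (k + t); zshift k3_gt0 i (2 * k + s)].
split; last split.
- by apply: cover_zshift4; lia.
- by apply: card_zshift4; lia.
- apply/eqP; rewrite setI_eq0 disjoints_subset; apply/subsetP => x.
  by rewrite !inE -!orbA => /or4P [] /eqP ->; rewrite -in_setC.
Qed.
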